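(* A tree has a good subgraph if and only if it has a good subgraph that is a tree (a good subtree).
   Context: Graphs are finite. A leaf is a vertex of degree one. Good subgraph: Let $H$ be a graph, $Q$ a subgraph of $H$ without isolated vertices, and $E_Q^-$ the set of edges of $H$ not in $Q$ incident with at least one vertex of $Q$. $Q$ is a good subgraph of $H$ if there exist a set of edges $E$ with $E_Q^-\subseteq E\subseteq E_H\setminus E_Q$ and an orientation $A_E$ of the edges of $E$ (where $d^+(x)$, $d^-(x)$ denote the numbers of arcs of $A_E$ leaving, resp. entering $x$, and $d_H(x)$ is the degree in $H$) such that the arcs of $A_E$ form a family $\mathcal P=\{P_x: x\in V_Q\}$ of oriented paths indexed by the vertices of $Q$ with: (i) every vertex $v$ of $Q$ is the initial vertex of exactly one path of $\mathcal P$, and $d^+(v)=1$, $d^-(v)=d_H(v)-d_Q(v)-1$; (ii) if $x$ is an inner vertex of a path of $\mathcal P$, then $d^+(x)=1$ and $d^-(x)=d_H(x)-1$; (iii) if $x$ is an end vertex of a path of $\mathcal P$, then $d^-(x)<d_H(x)$. *)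

(* Finite simple graphs on a finType T given by a
   symmetric irreflexive relation e : rel T. *)
From mathcomp Require Import all_boot.
Set Implicit Arguments. Unset Strict Implicit. Unset Printing Implicit Defensive.

Section Graphs.
Variable T : finType.

Definition edges (e : rel T) : {set {set T}} :=
  [set s : {set T} | [exists x : T, exists y : T, e x y && (s == [set x; y])]].

Definition degH (e : rel T) (x : T) : nat := #|[set y | e x y]|.

(* A subgraph Q without isolated vertices is determined by its edge set EQ. *)
Definition sub_vertices (EQ : {set {set T}}) : {set T} :=
  [set x | [exists s in EQ, x \in s]].

Definition sub_rel (EQ : {set {set T}}) : rel T := fun x y => [set x; y] \in EQ.

Definition degQ (EQ : {set {set T}}) (x : T) : nat := #|[set s in EQ | x \in s]|.

Definition EQminus (e : rel T) (EQ : {set {set T}}) : {set {set T}} :=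
  [set s in edges e :\: EQ | [exists x in s, x \in sub_vertices EQ]].

Definition dout (A : {set T * T}) (x : T) : nat := #|[set y | (x, y) \in A]|.
Definition din (A : {set T * T}) (x : T) : nat := #|[set y | (y, x) \in A]|.

Definition orientation_of (E : {set {set T}}) (A : {set T * T}) : Prop :=
  (forall x y, (x, y) \in A -> [set x; y] \in E) /\
  (forall x y, x != y -> [set x; y] \in E -> ((x, y) \in A) (+) ((y, x) \in A)).

Definition arcs_of (v : T) (p : seq T) : seq (T * T) := zip (v :: p) p.

(* Good subgraph (see the paper's definition).  The path P_v is v :: P v. *)
Definition good_subgraph (e : rel T) (EQ : {set {set T}}) : Prop :=
  [/\ EQ != set0, EQ \subset edges e &
  exists E : {set {set T}},
  [/\ EQminus e EQ \subset E, E \subset edges e :\: EQ &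
  exists A : {set T * T}, orientation_of E A /\
  exists P : T -> seq T,
    [/\
        forall v, v \in sub_vertices EQ ->
          uniq (v :: P v) && path (fun x y => (x, y) \in A) v (P v),
        forall a, a \in A <-> exists2 v, v \in sub_vertices EQ & a \in arcs_of v (P v),
        forall v, v \in sub_vertices EQ ->
          dout A v = 1 /\ din A v + degQ EQ v + 1 = degH e v,
        (* (ii) inner vertices *)
        forall v x, v \in sub_vertices EQ -> x \in behead (belast v (P v)) ->
          dout A x = 1 /\ din A x + 1 = degH e x &
        forall v x, v \in sub_vertices EQ -> (x = v \/ x = last v (P v)) ->
          din A x < degH e x]]].

Definition is_tree (V : {set T}) (r : rel T) : Prop :=
  [/\ V != set0,
      forall x y, x \in V -> y \in V ->
        exists p : seq T, [/\ path r x p, all (mem V) p & last x p = y] &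
      forall c : seq T, all (mem V) c -> uniq c -> 3 <= size c -> ~~ cycle r c].

End Graphs.

From mathcomp Require Import all_boot.
Set Implicit Arguments. Unset Strict Implicit. Unset Printing Implicit Defensive.

(* Let Q be good, with arcs A, and call a component of Q a source if no arc
   of A enters it.  A source exists: otherwise a walk can be extended backwards
   forever, through an arc entering the component of its first vertex and then
   inside that component along Q, or, from a vertex outside Q (an inner vertex
   of some path of the family), through the arc entering it.  Such a walk never
   immediately reverses an edge, so in a tree it never repeats a vertex, which
   is absurd.  Restricting Q to a source component C, with the edges of E that
   meet C and each path cut down to its first arc, keeps Q good because no arc
   enters C; and C, a connected subgraph of a tree, is a tree. *)

Section Forests.
Variables (T : finType) (e : rel T).
Hypothesis e_irr : irreflexive e.
Hypothesis e_acyclic : forall c : seq T, uniq c -> 3 <= size c -> ~~ cycle e c.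

Lemma acyclic_cons_uniq x t y :
  path e x t -> uniq (x :: t) -> e y x -> y != head x t -> uniq [:: y, x & t].
Proof.
move=> pt ut yx yNhd; rewrite cons_uniq ut andbT inE negb_or.
have -> /= : y != x by apply: contraTneq yx => ->; rewrite e_irr.
apply/negP => yt; case/splitPr: yt pt ut yNhd => t1 t2.
case: t1 => [|z t1] pt ut; first by rewrite eqxx.
move=> _; rewrite -cat_rcons in pt ut; set c := rcons (z :: t1) y in pt ut.
have cyc : cycle e (x :: c).
  by rewrite (cycle_path x) /= last_rcons yx; move: pt; rewrite cat_path => /andP[].
have uc : uniq (x :: c) by move: ut; rewrite -cat_cons cat_uniq => /andP[].
by have := e_acyclic uc; rewrite cyc /c /= size_rcons => /(_ isT).
Qed.

Lemma acyclic_cat_uniq v q x t :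
  path e v (rcons q x) -> uniq (v :: rcons q x) ->
  path e x t -> uniq (x :: t) -> last v q != head x t ->
  uniq (v :: rcons q x ++ t).
Proof.
elim: q v => [|u q IH] v /=.
  by case/andP=> vx _ _ pt ut; exact: acyclic_cons_uniq pt ut vx.
case/andP=> vu pq /andP[vNq uq] pt ut lastN.
apply: acyclic_cons_uniq vu _ => //.
- by rewrite cat_path pq last_rcons.
- exact: IH.
apply: contraNneq vNq => ->.
by case: q {IH pq uq lastN} => [|w q]; rewrite /= !inE eqxx ?orbT.
Qed.

End Forests.

Section Subgraphs.
Variable T : finType.

Lemma sub_verticesP (EQ : {set {set T}}) x :
  reflect (exists2 s, s \in EQ & x \in s) (x \in sub_vertices EQ).
Proof. by rewrite inE; apply: (iffP exists_inP) => -[s]; exists s. Qed.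

Lemma sub_relC (EQ : {set {set T}}) : symmetric (sub_rel EQ).
Proof. by move=> a b; rewrite /sub_rel setUC. Qed.

Lemma sub_rel_vertex (EQ : {set {set T}}) a b :
  sub_rel EQ a b -> a \in sub_vertices EQ.
Proof. by move=> ab; apply/sub_verticesP; exists [set a; b]; rewrite ?set21. Qed.

Lemma mem_arcs_of (v x y : T) p : (x, y) \in arcs_of v p -> x \in v :: p /\ y \in p.
Proof.
elim: p v => [|z p IH] v //=; rewrite inE => /predU1P[[-> ->]|/IH[xp yp]].
  by rewrite !mem_head.
by split; rewrite in_cons ?xp ?yp orbT.
Qed.

Lemma arcs_of_into (v y : T) p : y \in p -> exists x, (x, y) \in arcs_of v p.
Proof.
elim: p v => [|z p IH] v //=; rewrite inE => /predU1P[->|/(IH z)[x xy]].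
  by exists v; rewrite mem_head.
by exists x; rewrite inE xy orbT.
Qed.

Lemma mem_last_or_inner (v y : T) p :
  y \in p -> y = last v p \/ y \in behead (belast v p).
Proof.
by case: p => [|z p] //=; rewrite lastI mem_rcons inE => /predU1P[]; [left | right].
Qed.

Section Edges.
Variable e : rel T.
Hypotheses (e_sym : symmetric e) (e_irr : irreflexive e).

Lemma edges_at s x : s \in edges e -> x \in s -> exists2 y, e x y & s = [set x; y].
Proof.
rewrite inE => /existsP[a /existsP[b /andP[ab /eqP->]]] /set2P[->|->].
  by exists b.
by exists a; rewrite 1?e_sym // setUC.
Qed.

Lemma edges_rel x y : [set x; y] \in edges e -> e x y.
Proof.
move=> /edges_at/(_ (set21 x y))[z xz xyE].
have /set2P[yx|-> //] : y \in [set x; z] by rewrite -xyE set22.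
have /set2P[zx|zy] : z \in [set x; y] by rewrite xyE set22.
all: by rewrite ?zx ?zy ?yx e_irr in xz.
Qed.

End Edges.
End Subgraphs.

Section GoodSubgraph.
Variables (T : finType) (e : rel T).
Hypotheses (e_sym : symmetric e) (e_irr : irreflexive e).
Hypothesis e_acyclic : forall c : seq T, uniq c -> 3 <= size c -> ~~ cycle e c.
Variables (EQ E : {set {set T}}) (A : {set T * T}) (P : T -> seq T).
Hypothesis EQ_neq0 : EQ != set0.
Hypothesis EQ_edges : EQ \subset edges e.
Hypothesis EQminus_E : EQminus e EQ \subset E.
Hypothesis E_edges : E \subset edges e :\: EQ.
Hypothesis A_orients_E : orientation_of E A.
Hypothesis A_paths :
  forall a, a \in A <-> exists2 v, v \in sub_vertices EQ & a \in arcs_of v (P v).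
Hypothesis deg_start : forall v, v \in sub_vertices EQ ->
  dout A v = 1 /\ din A v + degQ EQ v + 1 = degH e v.
Hypothesis deg_inner : forall v x, v \in sub_vertices EQ ->
  x \in behead (belast v (P v)) -> dout A x = 1 /\ din A x + 1 = degH e x.
Hypothesis deg_end : forall v x, v \in sub_vertices EQ ->
  (x = v \/ x = last v (P v)) -> din A x < degH e x.

Local Notation Qv := (sub_vertices EQ).
Local Notation Qrel := (sub_rel EQ).

Lemma arc_edge x y : (x, y) \in A -> [set x; y] \in E.
Proof. exact: A_orients_E.1. Qed.

Lemma arc_rel x y : (x, y) \in A -> e x y.
Proof.
by move/arc_edge/(subsetP E_edges); rewrite inE => /andP[_ /(edges_rel e_sym e_irr)].
Qed.

Lemma arc_notQ x y : (x, y) \in A -> ~~ Qrel x y.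
Proof. by move/arc_edge/(subsetP E_edges); rewrite inE => /andP[]. Qed.

Lemma arc_asym x y : (x, y) \in A -> (y, x) \notin A.
Proof.
move=> xy; have xNy : x != y by apply: contraTneq (arc_rel xy) => ->; rewrite e_irr.
by have := A_orients_E.2 x y xNy (arc_edge xy); rewrite xy.
Qed.

Lemma Qrel_rel x y : Qrel x y -> e x y.
Proof. by move=> xy; apply: (edges_rel e_sym e_irr); apply: (subsetP EQ_edges). Qed.

Lemma din_lt_degH_head x y : (x, y) \in A -> din A y < degH e y.
Proof.
case/A_paths=> v vQ /mem_arcs_of[_ /(mem_last_or_inner v)[-> | inner]].
  exact: deg_end vQ (or_intror erefl).
by have [_ <-] := deg_inner vQ inner; rewrite addn1.
Qed.

Lemma arc_into_tail x y : x \notin Qv -> (x, y) \in A -> exists z, (z, x) \in A.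
Proof.
move=> xNQ /A_paths[v vQ /mem_arcs_of[+ _]]; rewrite inE => /predU1P[xv | xPv].
  by rewrite xv vQ in xNQ.
by have [z zx] := arcs_of_into v xPv; exists z; apply/A_paths; exists v.
Qed.

Definition succ v := odflt v [pick y | (v, y) \in A].

Lemma out_arcE v y : v \in Qv -> ((v, y) \in A) = (y == succ v).
Proof.
case/deg_start=> /eqP/cards1P[z outE] _.
have arcE w : ((v, w) \in A) = (w == z) by rewrite -in_set1 -outE inE.
rewrite arcE /succ; case: pickP => [w | none] /=; first by rewrite arcE => /eqP->.
by have := none z; rewrite arcE eqxx.
Qed.

Definition arc_walk x t :=
  [&& uniq (x :: t), path e x t & if t is y :: _ then (x, y) \in A else x \in Qv].

Lemma arc_walk_cons z x t :
  uniq (x :: t) -> path e x t -> (z, x) \in A -> z != head x t -> arc_walk z (x :: t).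
Proof.
move=> ut pt zx zNhd; have zx' := arc_rel zx.
rewrite /arc_walk zx andbT [path _ _ _]/= zx' pt !andbT.
by rewrite (acyclic_cons_uniq e_irr e_acyclic pt ut zx' zNhd).
Qed.

Lemma arc_walk_head_neq x t u :
  arc_walk x t -> Qrel u x || ((u, x) \in A) -> u != head x t.
Proof.
case/and3P=> _ _ hd ux; have eux : e u x by case/orP: ux => [/Qrel_rel | /arc_rel].
case: t hd => [_ | y t xy] /=; first by apply: contraTneq eux => ->; rewrite e_irr.
by apply: contraTneq ux => ->; rewrite negb_or sub_relC arc_notQ // arc_asym.
Qed.

Lemma arc_walk_extend x t :
    (forall u, u \in Qv -> exists y v, (y, v) \in A /\ connect Qrel v u) ->
  arc_walk x t -> exists x' t', arc_walk x' t' /\ size t < size t'.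
Proof.
move=> arc_into_comp wk; have /and3P[ut pt hd] := wk.
have [xQ | xNQ] := boolP (x \in Qv); last first.
  case: t ut pt hd wk => [_ _ xQ | y t ut pt xy wk]; first by rewrite xQ in xNQ.
  have [z zx] := arc_into_tail xNQ xy.
  exists z, [:: x, y & t]; split; last exact: ltnSn.
  by apply: arc_walk_cons; rewrite ?(arc_walk_head_neq wk) ?zx ?orbT.
have [y [v [yv /connectP[_ /shortenP[q pq uq _] xE]]]] := arc_into_comp x xQ.
case/lastP: q pq uq xE => [|q w] pq uq /=; rewrite ?last_rcons => xE; subst.
  exists y, (v :: t); split; last exact: ltnSn.
  by apply: arc_walk_cons; rewrite ?(arc_walk_head_neq wk) ?yv ?orbT.
have lastQ : Qrel (last v q) w by move: pq; rewrite rcons_path => /andP[].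
have ut' : uniq (v :: rcons q w ++ t).
  apply: (acyclic_cat_uniq e_irr e_acyclic) => //; first exact: (sub_path Qrel_rel pq).
  by apply: arc_walk_head_neq; rewrite ?lastQ.
have headQ : Qrel v (head v (rcons q w ++ t)).
  by case: q {lastQ ut'} pq uq => [|r q] /= /andP[].
exists y, (v :: rcons q w ++ t); split; last by rewrite /= ltnS size_cat leq_addl.
apply: arc_walk_cons => //.
  by rewrite cat_path last_rcons pt (sub_path Qrel_rel pq).
by apply: contraNneq (arc_notQ yv) => ->; rewrite sub_relC.
Qed.

Lemma source_component :
  exists2 x0, x0 \in Qv & forall y v, connect Qrel x0 v -> (y, v) \notin A.
Proof.
have [x0 x0Q] : exists x0, x0 \in Qv.
  case/set0Pn: EQ_neq0 => s sEQ; have := subsetP EQ_edges s sEQ.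
  rewrite inE => /existsP[a /existsP[b /andP[_ /eqP sE]]].
  by exists a; apply/sub_verticesP; exists s; rewrite // sE set21.
have [/exists_inP[x xQ /forallP src] | none] := boolP
  [exists x in Qv, forall v, connect Qrel x v ==> [forall y, (y, v) \notin A]].
  by exists x => // y v xv; move: (src v); rewrite xv => /forallP.
have arc_into_comp u : u \in Qv -> exists y v, (y, v) \in A /\ connect Qrel v u.
  move=> uQ; have /forallPn[v] := exists_inPn none u uQ.
  rewrite negb_imply => /andP[uv /forallPn[y]]; rewrite negbK => yv.
  by exists y, v; rewrite (sym_connect_sym (@sub_relC _ EQ)).
have long_arc_walk n : exists x t, arc_walk x t /\ n <= size t.
  elim: n => [|n [x [t [wk nt]]]]; first by exists x0, [::]; rewrite /arc_walk /= x0Q.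
  have [x' [t' [wk' tt']]] := arc_walk_extend arc_into_comp wk.
  by exists x', t'; split; last exact: leq_ltn_trans tt'.
have [x [t [/and3P[ut _ _] Tt]]] := long_arc_walk #|T|.
by have := max_card (mem (x :: t)); rewrite (card_uniqP ut) /= ltnNge Tt.
Qed.

Local Notation restrict C := [set s in EQ | s \subset C].

Section Restriction.
Variable C : {set T}.
Hypothesis C_Qv : {subset C <= Qv}.
Hypothesis C_closed : forall a b, Qrel a b -> a \in C -> b \in C.
Hypothesis C_source : forall y v, v \in C -> (y, v) \notin A.

Local Notation EC := [set s in E | [exists z in s, z \in C]].
Local Notation AC := [set a in A | a.1 \in C].

Lemma EQ_subset_C s v : s \in EQ -> v \in s -> v \in C -> s \subset C.
Proof.
move=> sEQ vs vC; have [w vw sE] := edges_at e_sym (subsetP EQ_edges s sEQ) vs.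
by rewrite sE subUset !sub1set vC (C_closed _ vC) // /sub_rel -sE.
Qed.

Lemma sub_vertices_restrict : sub_vertices (restrict C) = C.
Proof.
apply/setP => v; apply/sub_verticesP/idP => [[s] | vC].
  by rewrite inE => /andP[_ /subsetP sC] /sC.
have /sub_verticesP[s sEQ vs] := C_Qv vC.
by exists s; rewrite // inE sEQ (EQ_subset_C sEQ vs vC).
Qed.

Lemma degQ_restrict v : v \in C -> degQ (restrict C) v = degQ EQ v.
Proof.
move=> vC; apply: eq_card => s; rewrite !inE.
by case sEQ: (s \in EQ); case vs: (v \in s); rewrite ?andbF ?(EQ_subset_C sEQ vs vC).
Qed.

Lemma din_source v : v \in C -> din A v = 0.
Proof.
move=> vC; apply/eqP; rewrite cards_eq0; apply/eqP/setP => y.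
by rewrite !inE; apply/negbTE/C_source.
Qed.

Lemma din_restrict x : din AC x <= din A x.
Proof. by apply: subset_leq_card; apply/subsetP => y; rewrite !inE => /andP[]. Qed.

Lemma EQminus_restrict : EQminus e (restrict C) \subset EC.
Proof.
apply/subsetP => s; rewrite !inE sub_vertices_restrict.
case/andP=> /andP[sNEQC sed] /[dup] touch /exists_inP[z zs zC]; rewrite touch andbT.
have sNEQ : s \notin EQ.
  by apply: contra sNEQC => sEQ; rewrite sEQ (EQ_subset_C sEQ zs zC).
apply: (subsetP EQminus_E); rewrite !inE sNEQ sed /=.
by apply/exists_inP; exists z; rewrite ?C_Qv.
Qed.

Lemma orientation_restrict : orientation_of EC AC.
Proof.
split=> [x y | x y xNy].
  by rewrite !inE => /andP[/arc_edge -> xC]; apply/exists_inP; exists x; rewrite ?set21.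
rewrite inE => /andP[sE /exists_inP[z zs zC]].
have AC_A a b : z \in [set a; b] -> ((a, b) \in AC) = ((a, b) \in A).
  move=> zab; rewrite inE /= andb_idr // => ab.
  by case/set2P: zab zC => -> // bC; rewrite (negbTE (C_source a bC)) in ab.
have zyx : z \in [set y; x] by rewrite setUC.
by rewrite (AC_A _ _ zs) (AC_A _ _ zyx); apply: A_orients_E.2.
Qed.

Lemma restrict_arcsP a :
  a \in AC <-> exists2 v, v \in C & a \in arcs_of v [:: succ v].
Proof.
case: a => x y; rewrite inE /=; split => [/andP[xy xC] | [v vC]].
  by exists x; rewrite // mem_seq1 xpair_eqE eqxx -out_arcE ?C_Qv.
by rewrite mem_seq1 xpair_eqE => /andP[/eqP-> /eqP->]; rewrite out_arcE ?C_Qv ?eqxx.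
Qed.

Lemma restrict_good : C != set0 -> good_subgraph e (restrict C).
Proof.
case/set0Pn=> v0 v0C; split.
- have /sub_verticesP[s sEQ v0s] := C_Qv v0C.
  by apply/set0Pn; exists s; rewrite inE sEQ (EQ_subset_C sEQ v0s v0C).
- by apply/subsetP => s; rewrite inE => /andP[/(subsetP EQ_edges)].
exists EC; split; first exact: EQminus_restrict.
  apply/subsetP => s; rewrite inE => /andP[/(subsetP E_edges)].
  by rewrite !inE negb_and => /andP[-> ->].
exists AC; split; first exact: orientation_restrict.
have succ_arc v : v \in C -> (v, succ v) \in A by move=> vC; rewrite out_arcE ?C_Qv.
exists (fun v => [:: succ v]); rewrite sub_vertices_restrict; split.
- move=> v vC; rewrite /= !inE succ_arc // vC !andbT.
  by apply: contraTneq (arc_rel (succ_arc v vC)) => <-; rewrite e_irr.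
- exact: restrict_arcsP.
- move=> v vC; have [outv degv] := deg_start (C_Qv vC); split.
    by rewrite -outv; apply: eq_card => y; rewrite !inE vC andbT.
  have := din_restrict v; rewrite din_source // leqn0 => /eqP->.
  by rewrite degQ_restrict // -degv din_source.
- by [].
move=> v x vC xE; apply: leq_ltn_trans (din_restrict x) _.
case: xE => ->; first exact: deg_end (C_Qv vC) (or_introl erefl).
exact: din_lt_degH_head (succ_arc v vC).
Qed.

End Restriction.

Local Notation component x0 := [set v | connect Qrel x0 v].

Lemma component_is_tree x0 : is_tree (component x0) (sub_rel (restrict (component x0))).
Proof.
split.
- by apply/set0Pn; exists x0; rewrite inE connect0.
- move=> x y; rewrite !inE => x0x x0y.
  have /connectP[p pp ->] : connect Qrel x y.
    by apply: connect_trans x0y; rewrite (sym_connect_sym (@sub_relC _ EQ)).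
  have allC : all (mem (component x0)) (x :: p).
    by apply/allP => z /(path_connect pp) xz; rewrite !inE (connect_trans x0x xz).
  exists p; split => //; last by case/andP: allC.
  apply: sub_in_path allC pp => a b aC bC ab.
  by move: ab; rewrite /sub_rel inE subUset !sub1set => ->; rewrite aC bC.
- move=> c _ uc sc; apply: contra (e_acyclic uc sc); apply: sub_cycle => a b.
  by rewrite /sub_rel inE => /andP[/Qrel_rel].
Qed.

Lemma good_subtree_exists :
  exists EQ', good_subgraph e EQ' /\ is_tree (sub_vertices EQ') (sub_rel EQ').
Proof.
have [x0 x0Q src] := source_component.
have comp_closed a b : Qrel a b -> a \in component x0 -> b \in component x0.
  by rewrite !inE => ab x0a; apply: connect_trans x0a (connect1 ab).
have comp_Qv : {subset component x0 <= Qv}.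
  move=> v; rewrite inE => x0v.
  rewrite -(closed_connect _ x0v) // => a b ab.
  by rewrite (sub_rel_vertex ab) (@sub_rel_vertex _ _ b a) // sub_relC.
exists (restrict (component x0)); rewrite sub_vertices_restrict //.
split; last exact: component_is_tree.
apply: restrict_good => //; first by move=> y v; rewrite inE; apply: src.
by apply/set0Pn; exists x0; rewrite inE connect0.
Qed.

End GoodSubgraph.

Unset Implicit Arguments.

Theorem proposition7p2 (T : finType) (e : rel T) :
  symmetric e -> irreflexive e -> is_tree [set: T] e ->
  (exists EQ : {set {set T}}, good_subgraph e EQ) <->
  (exists EQ : {set {set T}},
      good_subgraph e EQ /\ is_tree (sub_vertices EQ) (sub_rel EQ)).
Proof.
move=> e_sym e_irr [_ _ tree_acyclic].
have e_acyclic c : uniq c -> 3 <= size c -> ~~ cycle e c.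
  by apply: tree_acyclic; apply/allP => z; rewrite inE.
split=> [[EQ [EQ_neq0 EQ_edges [E [EQminus_E E_edges [A [A_orients_E good]]]]]] |
         [EQ [good _]]]; last by exists EQ.
have [P [_ A_paths deg_start deg_inner deg_end]] := good.
exact: (good_subtree_exists e_sym e_irr e_acyclic EQ_neq0 EQ_edges EQminus_E E_edges
          A_orients_E A_paths deg_start deg_inner deg_end).
Qed.
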